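(* Let $E$ be a pseudo effect algebra satisfying (RDP) and let $m:E\to\mathbb R$ be a signed measure. Then $m$ is relatively bounded if and only if $m=m_1-m_2$ for some measures $m_1,m_2$ on $E$.
   Context: Pseudo effect algebra: partial algebra $(E;+,0,1)$ such that for all $a,b,c$: (i) $a+b$ and $(a+b)+c$ exist iff $b+c$ and $a+(b+c)$ exist, and then they are equal; (ii) there is exactly one $d$ and one $e$ with $a+d=e+a=1$; (iii) if $a+b$ exists there are $d,e$ with $a+b=d+a=b+e$; (iv) if $1+a$ or $a+1$ exists then $a=0$. Order: $a\le b$ iff $a+c=b$ for some $c$. (RDP): whenever $a_1+a_2=b_1+b_2$ there are $d_1,\dots,d_4$ with $d_1+d_2=a_1$, $d_3+d_4=a_2$, $d_1+d_3=b_1$, $d_2+d_4=b_2$. A signed measure is $m:E\to\mathbb R$ with $m(a+b)=m(a)+m(b)$ whenever $a+b$ is defined; a measure is a signed measure with nonnegative values. A map $m:E\to\mathbb R$ is relatively bounded if $m(W)$ is bounded in $\mathbb R$ for every subset $W\subseteq E$ that is bounded above and below in $E$. *)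

From Stdlib Require Import Reals.
Open Scope R_scope.

(* Partial addition is modelled as a total function into [option]:
   [pea_add a b = Some c] means "a + b is defined and equals c". *)

Definition opt_bind {A : Type} (o : option A) (f : A -> option A) : option A :=
  match o with Some x => f x | None => None end.

Record PseudoEffectAlgebra := {
  pea_car :> Type;
  pea_add : pea_car -> pea_car -> option pea_car;
  pea_zero : pea_car;
  pea_one : pea_car;
  (* (i): (a+b)+c defined iff a+(b+c) defined, and then equal *)
  pea_assoc : forall a b c : pea_car,
    opt_bind (pea_add a b) (fun x => pea_add x c)
    = opt_bind (pea_add b c) (fun y => pea_add a y);
  pea_compl_r : forall a : pea_car, exists! d, pea_add a d = Some pea_one;
  pea_compl_l : forall a : pea_car, exists! e, pea_add e a = Some pea_one;
  pea_conj : forall a b s : pea_car, pea_add a b = Some s ->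
    exists d e, pea_add d a = Some s /\ pea_add b e = Some s;
  pea_one_l : forall a : pea_car, pea_add pea_one a <> None -> a = pea_zero;
  pea_one_r : forall a : pea_car, pea_add a pea_one <> None -> a = pea_zero
}.

Section Defs.
Variable E : PseudoEffectAlgebra.

Definition pea_le (a b : E) : Prop := exists c, pea_add E a c = Some b.

Definition RDP : Prop :=
  forall a1 a2 b1 b2 s : E,
    pea_add E a1 a2 = Some s -> pea_add E b1 b2 = Some s ->
    exists d1 d2 d3 d4 : E,
      pea_add E d1 d2 = Some a1 /\ pea_add E d3 d4 = Some a2 /\
      pea_add E d1 d3 = Some b1 /\ pea_add E d2 d4 = Some b2.

Definition signed_measure (m : E -> R) : Prop :=
  forall a b s : E, pea_add E a b = Some s -> m s = m a + m b.

Definition measure (m : E -> R) : Prop :=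
  signed_measure m /\ forall a : E, 0 <= m a.

Definition relatively_bounded (m : E -> R) : Prop :=
  forall W : E -> Prop,
    (exists u : E, forall w, W w -> pea_le w u) ->
    (exists l : E, forall w, W w -> pea_le l w) ->
    exists M : R, forall w, W w -> Rabs (m w) <= M.
End Defs.

(* The positive part of a signed measure m bounded above is its upper variation
   m+(a) := sup { m b | b <= a }. It is superadditive because x <= a and y <= b
   give x + y <= a + b, and subadditive by (RDP): a decomposition z + w = a + b
   refines into z = d1 + d2 with d1 <= a and d2 <= b. Hence m = m+ - (m+ - m) is a
   difference of measures. Conversely, a difference of measures is bounded on
   every set bounded above, because measures are monotone. *)
From Stdlib Require Import Reals Lra.
Open Scope R_scope.

Section PseudoEffectAlgebraFacts.
Variable E : PseudoEffectAlgebra.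

Lemma pea_add_assoc_lr (a b c ab r : E) :
  pea_add E a b = Some ab -> pea_add E ab c = Some r ->
  exists bc, pea_add E b c = Some bc /\ pea_add E a bc = Some r.
Proof.
  intros Hab Hr. pose proof (pea_assoc E a b c) as H.
  rewrite Hab in H; simpl in H; rewrite Hr in H.
  destruct (pea_add E b c) as [bc|]; simpl in H; [now exists bc | discriminate].
Qed.

Lemma pea_add_assoc_rl (a b c bc r : E) :
  pea_add E b c = Some bc -> pea_add E a bc = Some r ->
  exists ab, pea_add E a b = Some ab /\ pea_add E ab c = Some r.
Proof.
  intros Hbc Hr. pose proof (pea_assoc E a b c) as H.
  rewrite Hbc in H; simpl in H; rewrite Hr in H.
  destruct (pea_add E a b) as [ab|]; simpl in H; [now exists ab | discriminate].
Qed.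

Lemma pea_add_one_zero : pea_add E (pea_one E) (pea_zero E) = Some (pea_one E).
Proof.
  destruct (pea_compl_r E (pea_one E)) as [d [Hd _]].
  replace d with (pea_zero E) in Hd; [exact Hd|].
  symmetry; apply pea_one_l; rewrite Hd; discriminate.
Qed.

Lemma pea_add_zero_one : pea_add E (pea_zero E) (pea_one E) = Some (pea_one E).
Proof.
  destruct (pea_compl_l E (pea_one E)) as [d [Hd _]].
  replace d with (pea_zero E) in Hd; [exact Hd|].
  symmetry; apply pea_one_r; rewrite Hd; discriminate.
Qed.

(* Both unit laws come from uniqueness of complements: with e + b = 1,
   the sum e + (b + 0) is again 1. *)
Lemma pea_add_zero_r (b : E) : pea_add E b (pea_zero E) = Some b.
Proof.
  destruct (pea_compl_l E b) as [e [He _]].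
  destruct (pea_add_assoc_lr _ _ _ _ _ He pea_add_one_zero) as [b0 [Hb0 He1]].
  destruct (pea_compl_r E e) as [d [_ Huniq]].
  rewrite Hb0, <- (Huniq b He), (Huniq b0 He1); reflexivity.
Qed.

Lemma pea_add_zero_l (b : E) : pea_add E (pea_zero E) b = Some b.
Proof.
  destruct (pea_compl_r E b) as [f [Hf _]].
  destruct (pea_add_assoc_rl _ _ _ _ _ Hf pea_add_zero_one) as [b0 [Hb0 H1f]].
  destruct (pea_compl_l E f) as [d [_ Huniq]].
  rewrite Hb0, <- (Huniq b Hf), (Huniq b0 H1f); reflexivity.
Qed.

Lemma pea_le_refl (b : E) : pea_le E b b.
Proof. exists (pea_zero E); apply pea_add_zero_r. Qed.

Lemma pea_le0x (b : E) : pea_le E (pea_zero E) b.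
Proof. exists b; apply pea_add_zero_l. Qed.

Lemma pea_lex1 (b : E) : pea_le E b (pea_one E).
Proof. destruct (pea_compl_r E b) as [f [Hf _]]; now exists f. Qed.

Lemma pea_le_add (a b s x y : E) :
  pea_le E x a -> pea_le E y b -> pea_add E a b = Some s ->
  exists xy, pea_add E x y = Some xy /\ pea_le E xy s.
Proof.
  intros [c Hxc] [d Hyd] Hs.
  destruct (pea_add_assoc_lr _ _ _ _ _ Hxc Hs) as [cb [Hcb Hxcb]].
  destruct (pea_add_assoc_rl _ _ _ _ _ Hyd Hcb) as [cy [Hcy Hcyd]].
  (* move c to the right of y: c + y = y + e *)
  destruct (pea_conj E _ _ _ Hcy) as [_ [e [_ Hye]]].
  destruct (pea_add_assoc_lr _ _ _ _ _ Hye Hcyd) as [ed [Hed Hyed]].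
  destruct (pea_add_assoc_rl _ _ _ _ _ Hyed Hxcb) as [xy [Hxy Hxys]].
  exists xy; split; [exact Hxy | now exists ed].
Qed.

Lemma signed_measure0 (m : E -> R) : signed_measure E m -> m (pea_zero E) = 0.
Proof. intros Hm; pose proof (Hm _ _ _ (pea_add_zero_r (pea_zero E))); lra. Qed.

Lemma measure_le (m : E -> R) (a b : E) :
  measure E m -> pea_le E a b -> 0 <= m a <= m b.
Proof.
  intros [Hm Hpos] [c Hc]; rewrite (Hm _ _ _ Hc).
  pose proof (Hpos a); pose proof (Hpos c); lra.
Qed.

End PseudoEffectAlgebraFacts.

Section UpperVariation.
Variable E : PseudoEffectAlgebra.
Hypothesis HRDP : RDP E.
Variable m : E -> R.
Hypothesis Hm : signed_measure E m.
Variable M : R.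
Hypothesis m_le_M : forall a, m a <= M.

Definition values_below (a : E) : R -> Prop :=
  fun r => exists b, pea_le E b a /\ r = m b.

Lemma values_below_bound (a : E) : bound (values_below a).
Proof. exists M; intros r [b [_ ->]]; apply m_le_M. Qed.

Lemma values_below_nonempty (a : E) : exists r, values_below a r.
Proof. exists (m a), a; split; [apply pea_le_refl | reflexivity]. Qed.

Definition upper_variation (a : E) : R :=
  proj1_sig (completeness _ (values_below_bound a) (values_below_nonempty a)).

Lemma upper_variation_lub (a : E) : is_lub (values_below a) (upper_variation a).
Proof. unfold upper_variation; destruct completeness; assumption. Qed.

Lemma le_upper_variation (a b : E) : pea_le E b a -> m b <= upper_variation a.
Proof. intros Hba; apply (upper_variation_lub a); now exists b. Qed.

Lemma upper_variation_least (a : E) (u : R) :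
  (forall b, pea_le E b a -> m b <= u) -> upper_variation a <= u.
Proof. intros Hu; apply (upper_variation_lub a); intros r [b [Hb ->]]; auto. Qed.

Lemma upper_variation_subadditive (a b s : E) : pea_add E a b = Some s ->
  upper_variation s <= upper_variation a + upper_variation b.
Proof.
  intros Hs; apply upper_variation_least; intros z [w Hzw].
  destruct (HRDP _ _ _ _ _ Hzw Hs) as (d1 & d2 & d3 & d4 & Hz & _ & Ha & Hb).
  rewrite (Hm _ _ _ Hz).
  assert (m d1 <= upper_variation a) by (apply le_upper_variation; now exists d3).
  assert (m d2 <= upper_variation b) by (apply le_upper_variation; now exists d4).
  lra.
Qed.

Lemma upper_variation_superadditive (a b s : E) : pea_add E a b = Some s ->
  upper_variation a + upper_variation b <= upper_variation s.
Proof.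
  intros Hs.
  assert (Hxy : forall x y, pea_le E x a -> pea_le E y b ->
            m x + m y <= upper_variation s).
  { intros x y Hx Hy.
    destruct (pea_le_add _ _ _ _ _ _ Hx Hy Hs) as [xy [Hxy Hle]].
    rewrite <- (Hm _ _ _ Hxy); now apply le_upper_variation. }
  assert (Hb : forall y, pea_le E y b ->
            upper_variation a <= upper_variation s - m y).
  { intros y Hy; apply upper_variation_least; intros x Hx.
    specialize (Hxy x y Hx Hy); lra. }
  assert (upper_variation b <= upper_variation s - upper_variation a).
  { apply upper_variation_least; intros y Hy; specialize (Hb y Hy); lra. }
  lra.
Qed.

Lemma measure_upper_variation : measure E upper_variation.
Proof.
  split.
  - intros a b s Hs; apply Rle_antisym;
      [apply upper_variation_subadditive | apply upper_variation_superadditive];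
      assumption.
  - intros a; rewrite <- (signed_measure0 E m Hm).
    apply le_upper_variation, pea_le0x.
Qed.

Lemma measure_upper_variation_sub : measure E (fun a => upper_variation a - m a).
Proof.
  split.
  - intros a b s Hs; rewrite (proj1 measure_upper_variation _ _ _ Hs), (Hm _ _ _ Hs).
    ring.
  - intros a; pose proof (le_upper_variation a a (pea_le_refl E a)); lra.
Qed.

End UpperVariation.

Lemma relatively_bounded_bounded_above (E : PseudoEffectAlgebra) (m : E -> R) :
  relatively_bounded E m -> exists M, forall a, m a <= M.
Proof.
  intros Hrb.
  destruct (Hrb (fun _ => True)) as [M HM].
  - exists (pea_one E); intros w _; apply pea_lex1.
  - exists (pea_zero E); intros w _; apply pea_le0x.
  - exists M; intros a; pose proof (Rle_abs (m a)); specialize (HM a I); lra.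
Qed.

Lemma measure_sub_relatively_bounded (E : PseudoEffectAlgebra) (m1 m2 : E -> R) :
  measure E m1 -> measure E m2 -> relatively_bounded E (fun a => m1 a - m2 a).
Proof.
  intros Hm1 Hm2 W [u Hu] _; exists (m1 u + m2 u); intros w Hw.
  pose proof (measure_le E m1 _ _ Hm1 (Hu w Hw)).
  pose proof (measure_le E m2 _ _ Hm2 (Hu w Hw)).
  apply Rabs_le; lra.
Qed.

Theorem proposition3p3 (E : PseudoEffectAlgebra) (HRDP : RDP E)
  (m : E -> R) (Hm : signed_measure E m) :
  relatively_bounded E m <->
  exists m1 m2 : E -> R,
    measure E m1 /\ measure E m2 /\ forall a : E, m a = m1 a - m2 a.
Proof.
  split.
  - intros Hrb; destruct (relatively_bounded_bounded_above E m Hrb) as [M HM].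
    exists (upper_variation E m M HM), (fun a => upper_variation E m M HM a - m a).
    split; [|split].
    + exact (measure_upper_variation E HRDP m Hm M HM).
    + exact (measure_upper_variation_sub E HRDP m Hm M HM).
    + intros a; ring.
  - intros (m1 & m2 & Hm1 & Hm2 & Heq) W Hup Hlow.
    destruct (measure_sub_relatively_bounded E m1 m2 Hm1 Hm2 W Hup Hlow) as [B HB].
    exists B; intros w Hw; rewrite Heq; exact (HB w Hw).
Qed.
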